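(* Let $n>5$, let $G_R=(V,E_R)$ be an undirected (unweighted) connected graph of order $n$ such that $w^R_{xy}/w^R_{yx}\le c$ for every $(x,y)\in E_R$, and let $G_M=(V,E_M)$ be the clique of order $n$. If $r\ge 2c\left(1+\frac{2}{n-5}\right)$, then for every $S\subseteq V$ the absorption time $\tau$ of the two-graph Moran process with resident graph $G_R$ and mutant graph $G_M$ satisfies $$\mathbb{E}[\tau\mid X_0=S]\le\frac{r}{r-c}\,n\,(n-|S|).$$ In particular, $\mathbb{E}[\tau]\le\frac{r}{r-c}n^2$.
   Context: Two-graph Moran process: vertex set $V=\{1,\dots,n\}$; resident graph $G_R=(V,E_R)$ and mutant graph $G_M=(V,E_M)$ with row-stochastic weight matrices $W_R=[w^R_{ij}]$, $W_M=[w^M_{ij}]$ ($w^R_{ij}>0$ iff $(i,j)\in E_R$, similarly for $M$). The state $X_t$ at time $t$ is the mutant set; residents have fitness $1$, mutants fitness $r>0$. Each step a vertex $i$ is chosen with probability proportional to fitness; if $i$ is a mutant, it picks $j$ with probability $w^M_{ij}$ and $j$ becomes a mutant; if a resident, it picks $j$ with probability $w^R_{ij}$ and $j$ becomes a resident. The absorption time is $\tau=\min\{t: X_t\in\{\emptyset,V\}\}$. In $\mathbb{E}[\tau]$ (without conditioning), $X_0$ is a single mutant at a uniformly random vertex. Undirected graphs are unweighted: $w_{xy}=1/\deg(x)$ for neighbours $y$ of $x$, so $w^R_{xy}/w^R_{yx}=\deg(y)/\deg(x)$; for the clique $w^M_{xy}=1/(n-1)$. *)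

From HB Require Import structures.
From mathcomp Require Import all_boot all_order all_algebra.
From mathcomp Require Import all_classical all_reals all_analysis.
Set Implicit Arguments. Unset Strict Implicit. Unset Printing Implicit Defensive.
Import Order.TTheory GRing.Theory Num.Theory.
Local Open Scope ring_scope.

Section TwoGraphMoran.
Variables (R : realType) (n : nat).
Implicit Types (e : rel 'I_n) (S T : {set 'I_n}).

Definition undirected e := symmetric e /\ irreflexive e.
Definition connected_graph e := forall x y : 'I_n, connect e x y.

Definition deg e (x : 'I_n) : nat := #|[set y | e x y]|.

(* Unweighted undirected graph: w_xy = 1/deg(x) for neighbours y of x. *)
Definition wgraph e (x y : 'I_n) : R :=
  if e x y then (deg e x)%:R^-1 else 0.

Definition wclique (x y : 'I_n) : R :=
  if x != y then (n.-1)%:R^-1 else 0.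

Definition total_fitness (r : R) S : R := r * #|S|%:R + (n - #|S|)%:R.

Definition moran_step (WR WM : 'I_n -> 'I_n -> R) (r : R) S T : R :=
  \sum_(i : 'I_n) \sum_(j : 'I_n)
     (if i \in S then
        (r / total_fitness r S) * WM i j * (T == j |: S)%:R
      else
        (total_fitness r S)^-1 * WR i j * (T == S :\ j)%:R).

Fixpoint moran_dist (WR WM : 'I_n -> 'I_n -> R) (r : R) (S0 : {set 'I_n})
    (t : nat) (T : {set 'I_n}) : R :=
  match t with
  | 0 => (T == S0)%:R
  | t'.+1 => \sum_(S : {set 'I_n}) moran_dist WR WM r S0 t' S * moran_step WR WM r S T
  end.

Definition absorbing S : bool := (S == finset.set0) || (S == [set: 'I_n]).

(* P(tau > t | X_0 = S0) = P(X_t not in {emptyset, V}) (absorbing states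
   are never left). *)
Definition tail_prob WR WM r S0 t : R :=
  \sum_(T : {set 'I_n} | ~~ absorbing T) moran_dist WR WM r S0 t T.

(* E[tau | X_0 = S0] = sum_{t >= 0} P(tau > t), in the extended reals. *)
Definition exp_absorption WR WM r S0 : \bar R :=
  (\sum_(0 <= t <oo) (tail_prob WR WM r S0 t)%:E)%E.

(* E[tau] with X_0 a single mutant at a uniformly random vertex. *)
Definition exp_absorption_uniform WR WM r : \bar R :=
  (\sum_(v : 'I_n) ((n%:R)^-1)%:E * exp_absorption WR WM r [set v])%E.

End TwoGraphMoran.

From HB Require Import structures.
From mathcomp Require Import all_boot all_order all_algebra.
From mathcomp Require Import all_classical all_reals all_analysis.
From mathcomp Require Import ring lra.
Set Implicit Arguments. Unset Strict Implicit. Unset Printing Implicit Defensive.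
Import Order.TTheory GRing.Theory Num.Theory.
Local Open Scope ring_scope.

(* A Lyapunov argument for the potential phi S := K (n - |S|), K := r n / (r - c).
   From a non-absorbing state S with u := |S|, v := n - |S| and total fitness
   F := r u + v, the clique of mutants raises |S| in expectation by r u v / ((n - 1) F),
   while residents lower it by at most D / F, D being the resident weight flowing into S;
   the ratio condition and row-stochasticity give D <= c min(u, v).  The fitness
   condition then yields r u v / (n - 1) - D >= r - c, so phi drops in expectation by at
   least K (r - c) / F = r n / F >= 1 per step.  As phi >= 0, the expected number of steps
   before absorption is at most phi (X_0). *)

Lemma sum_if_setC (T : finType) (V : nmodType) (A : {set T}) (f g : T -> V) :
  \sum_i (if i \in A then f i else g i) = \sum_(i in A) f i + \sum_(i in ~: A) g i.
Proof.
rewrite (bigID (mem A)) /=; congr (_ + _); first by apply: eq_bigr => i ->.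
by apply: eq_big => [i|i /negbTE ->]; rewrite ?inE.
Qed.

Lemma sum_mul_indicator (T : finType) (R : pzSemiRingType) (A : {set T}) (x : T -> R) :
  \sum_j x j * (j \in A)%:R = \sum_(j in A) x j.
Proof.
rewrite [RHS]big_mkcond; apply: eq_bigr => j _.
by case: (j \in A); rewrite ?mulr1 ?mulr0.
Qed.

Lemma sum_mul_eq_indicator (T : finType) (R : pzSemiRingType) (X : T) (a : R) (g : T -> R) :
  \sum_Y a * (Y == X)%:R * g Y = a * g X.
Proof.
rewrite (bigD1 X) //= eqxx mulr1 big1 ?addr0 // => Y /negbTE ->.
by rewrite mulr0 mul0r.
Qed.

Section MoranStep.
Variables (R : realType) (n : nat) (WR WM : 'I_n -> 'I_n -> R) (r : R).
Implicit Types (S T : {set 'I_n}) (W : 'I_n -> 'I_n -> R).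

Definition cut_weight W (A B : {set 'I_n}) : R :=
  \sum_(i in A) \sum_(j in B) W i j.

Lemma total_fitnessE S : total_fitness r S = r * #|S|%:R + #|~: S|%:R.
Proof. by rewrite /total_fitness -[n in (n - _)%N](card_ord n) -(cardsC S) addKn. Qed.

Lemma moran_step_expect S (g : {set 'I_n} -> R) :
  \sum_T moran_step WR WM r S T * g T =
  \sum_i \sum_j (if i \in S then r / total_fitness r S * WM i j * g (j |: S)
                 else (total_fitness r S)^-1 * WR i j * g (S :\ j)).
Proof.
rewrite /moran_step.
under eq_bigr => T _ do rewrite mulr_suml.
rewrite exchange_big; apply: eq_bigr => i _.
under eq_bigr => T _ do rewrite mulr_suml.
rewrite exchange_big; apply: eq_bigr => j _.
by case: (i \in S); rewrite sum_mul_eq_indicator.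
Qed.

Lemma moran_step_drift S :
  \sum_T moran_step WR WM r S T * (#|T|%:R - #|S|%:R) =
  (r * cut_weight WM S (~: S) - cut_weight WR (~: S) S) / total_fitness r S.
Proof.
rewrite moran_step_expect.
have gain j : #|j |: S|%:R - #|S|%:R = (j \in ~: S)%:R :> R.
  by rewrite cardsU1 natrD addrK inE.
have loss j : #|S :\ j|%:R - #|S|%:R = - (j \in S)%:R :> R.
  by rewrite [#|S|](cardsD1 j) natrD; ring.
under eq_bigr => i _ do under eq_bigr => j _ do rewrite gain loss.
transitivity (\sum_i (if i \in S then r / total_fitness r S * \sum_(j in ~: S) WM i j
                      else - ((total_fitness r S)^-1 * \sum_(j in S) WR i j))).
  apply: eq_bigr => i _; case: (i \in S).
    by under eq_bigr => j _ do rewrite -mulrA; rewrite -mulr_sumr sum_mul_indicator.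
  under eq_bigr => j _ do rewrite mulrN -mulrA.
  by rewrite sumrN -mulr_sumr sum_mul_indicator.
by rewrite sum_if_setC sumrN -!mulr_sumr /cut_weight; ring.
Qed.

Lemma cut_weight_le_card W A B :
  (forall i j, 0 <= W i j) -> (forall i, \sum_j W i j <= 1) ->
  cut_weight W A B <= #|A|%:R.
Proof.
move=> W_ge0 W_row; rewrite /cut_weight -sum1_card natr_sum ler_sum // => i _.
apply: le_trans (W_row i); rewrite [leRHS](bigID (mem B)) /= lerDl.
exact: sumr_ge0.
Qed.

Hypotheses (r_ge0 : 0 <= r)
  (WR_ge0 : forall i j, 0 <= WR i j) (WM_ge0 : forall i j, 0 <= WM i j)
  (WR_row : forall i, \sum_j WR i j <= 1) (WM_row : forall i, \sum_j WM i j <= 1).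

Lemma total_fitness_ge0 S : 0 <= total_fitness r S.
Proof. by rewrite total_fitnessE addr_ge0 ?mulr_ge0. Qed.

Lemma moran_step_ge0 S T : 0 <= moran_step WR WM r S T.
Proof.
have F_ge0 := total_fitness_ge0 S.
apply: sumr_ge0 => i _; apply: sumr_ge0 => j _.
by case: (i \in S); rewrite !mulr_ge0 ?divr_ge0 ?invr_ge0.
Qed.

Lemma moran_step_mass_le1 S : \sum_T moran_step WR WM r S T <= 1.
Proof.
have -> : \sum_T moran_step WR WM r S T = \sum_T moran_step WR WM r S T * 1.
  by under [RHS]eq_bigr do rewrite mulr1.
rewrite moran_step_expect; set F := total_fitness r S.
have F_ge0 : 0 <= F := total_fitness_ge0 S.
apply: (@le_trans _ _ (\sum_i (if i \in S then r / F else F^-1))).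
  apply: ler_sum => i _; case: (i \in S); under eq_bigr do rewrite mulr1;
    rewrite -mulr_sumr; apply: ler_piMr.
  - exact: divr_ge0.
  - exact: WM_row.
  - by rewrite invr_ge0.
  - exact: WR_row.
rewrite sum_if_setC !sumr_const -[_ *+ #|S|]mulr_natl -[_ *+ #|~: S|]mulr_natl.
have -> : #|S|%:R * (r / F) + #|~: S|%:R * F^-1 = F / F.
  by rewrite /F total_fitnessE; ring.
by have [->|F_neq0] := eqVneq F 0; rewrite ?mul0r ?divff.
Qed.

End MoranStep.

Lemma nneseries_le_ub (R : realType) (u : nat -> R) (B : R) :
  (forall t, 0 <= u t) -> (forall N, \sum_(0 <= t < N) u t <= B) ->
  (\sum_(0 <= t <oo) (u t)%:E <= B%:E)%E.
Proof.
move=> u_ge0 u_ub.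
apply: lime_le; first by apply: is_cvg_nneseries => t _ _; rewrite lee_fin.
by apply: nearW => N /=; rewrite sumEFin lee_fin.
Qed.

Section Lyapunov.
Variables (R : realType) (n : nat) (WR WM : 'I_n -> 'I_n -> R) (r : R).
Variable phi : {set 'I_n} -> R.
Implicit Types (S T : {set 'I_n}).
Hypothesis step_ge0 : forall S T, 0 <= moran_step WR WM r S T.
Hypothesis phi_ge0 : forall S, 0 <= phi S.
Hypothesis phi_drift : forall S,
  \sum_T moran_step WR WM r S T * phi T <= phi S - (~~ absorbing S)%:R.

Lemma moran_dist_ge0 S0 t T : 0 <= moran_dist WR WM r S0 t T.
Proof.
elim: t T => [|t IH] T /=; first exact: ler0n.
by apply: sumr_ge0 => S _; apply: mulr_ge0.
Qed.

Lemma moran_dist_potential_step S0 t :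
  \sum_T moran_dist WR WM r S0 t.+1 T * phi T <=
  \sum_T moran_dist WR WM r S0 t T * phi T - tail_prob WR WM r S0 t.
Proof.
rewrite /tail_prob /=.
under eq_bigr => T _ do rewrite mulr_suml.
rewrite exchange_big /=.
under eq_bigr => S _ do (under eq_bigr => T _ do rewrite -mulrA; rewrite -mulr_sumr).
rewrite [X in _ - X]big_mkcond /= -sumrB; apply: ler_sum => S _.
have := ler_wpM2l (moran_dist_ge0 S0 t S) (phi_drift S).
by case: (~~ absorbing S); rewrite /= ?mulr1 ?mulr0 ?subr0 // mulrBr mulr1.
Qed.

Lemma tail_prob_sum_le S0 N :
  \sum_(0 <= t < N) tail_prob WR WM r S0 t <= phi S0.
Proof.
pose Phi t := \sum_T moran_dist WR WM r S0 t T * phi T.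
have Phi0 : Phi 0%N = phi S0.
  rewrite /Phi /= (bigD1 S0) //= eqxx mul1r big1 ?addr0 // => T /negbTE ->.
  exact: mul0r.
suff : \sum_(0 <= t < N) tail_prob WR WM r S0 t + Phi N <= phi S0.
  apply: le_trans; rewrite lerDl; apply: sumr_ge0 => T _.
  exact: mulr_ge0 (moran_dist_ge0 _ _ _) (phi_ge0 _).
elim: N => [|N IH]; first by rewrite big_geq // add0r Phi0.
rewrite big_nat_recr //=; apply: le_trans IH.
have := moran_dist_potential_step S0 N; rewrite -/(Phi N) -/(Phi N.+1); lra.
Qed.

Lemma exp_absorption_le S0 : (exp_absorption WR WM r S0 <= (phi S0)%:E)%E.
Proof.
apply: nneseries_le_ub; last exact: tail_prob_sum_le.
by move=> t; apply: sumr_ge0 => T _; apply: moran_dist_ge0.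
Qed.

End Lyapunov.

Lemma exp_absorption_uniform_le (R : realType) (n : nat) (WR WM : 'I_n -> 'I_n -> R)
    (r B : R) :
  (0 < n)%N -> (forall v : 'I_n, (exp_absorption WR WM r [set v] <= B%:E)%E) ->
  (exp_absorption_uniform WR WM r <= B%:E)%E.
Proof.
move=> n_gt0 le_B; rewrite /exp_absorption_uniform.
apply: (@le_trans _ _ (\sum_(v : 'I_n) ((n%:R^-1)%:E * B%:E))%E).
  by apply: lee_sum => v _; apply: lee_wpmul2l; rewrite ?lee_fin ?invr_ge0.
rewrite -EFinM sumEFin sumr_const card_ord -[_ *+ n]mulr_natr mulrAC mulVf ?mul1r //.
by rewrite pnatr_eq0 -lt0n.
Qed.

Section Weights.
Variables (R : realType) (n : nat).
Implicit Types (S : {set 'I_n}) (e : rel 'I_n).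

Lemma wclique_ge0 x y : 0 <= @wclique R n x y.
Proof. by rewrite /wclique; case: (x != y); rewrite ?invr_ge0. Qed.

Lemma wclique_row_le1 x : \sum_y @wclique R n x y <= 1.
Proof.
rewrite /wclique -big_mkcond /= sumr_const.
have -> : #|[pred y | x != y]| = n.-1.
  have := cardC1 x; rewrite card_ord => <-.
  by apply: eq_card => y; rewrite !inE eq_sym.
rewrite -[_ *+ _]mulr_natl.
by have [->|n1_neq0] := eqVneq (n.-1%:R : R) 0; rewrite ?mul0r ?divff.
Qed.

Lemma cut_weight_wclique S :
  cut_weight (@wclique R n) S (~: S) = #|S|%:R * #|~: S|%:R / n.-1%:R.
Proof.
transitivity (\sum_(i in S) \sum_(j in ~: S) (n.-1%:R : R)^-1).
  apply: eq_bigr => i iS; apply: eq_bigr => j; rewrite inE => jS.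
  by rewrite /wclique (_ : i != j) //; apply: contraNneq jS => <-.
by rewrite !sumr_const -mulrnA -[_ *+ _]mulr_natl natrM [_ * #|S|%:R]mulrC.
Qed.

Lemma wgraph_ge0 e x y : 0 <= wgraph R e x y.
Proof. by rewrite /wgraph; case: (e x y); rewrite ?invr_ge0. Qed.

Lemma wgraph_gt0 e x y : e x y -> 0 < wgraph R e x y.
Proof.
move=> exy; rewrite /wgraph exy invr_gt0 ltr0n.
by apply/card_gt0P; exists y; rewrite inE.
Qed.

Lemma wgraph_row_le1 e x : \sum_y wgraph R e x y <= 1.
Proof.
rewrite /wgraph -big_mkcond /= sumr_const.
have -> : #|[pred y | e x y]| = deg e x by rewrite /deg cardsE.
rewrite -[_ *+ _]mulr_natl.
by have [->|deg_neq0] := eqVneq ((deg e x)%:R : R) 0; rewrite ?mul0r ?divff.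
Qed.

Variables (e : rel 'I_n) (c : R).
Hypothesis e_sym : symmetric e.
Hypothesis wgraph_ratio_le : forall x y, e x y -> wgraph R e x y / wgraph R e y x <= c.

Lemma wgraph_le_ratio x y : wgraph R e x y <= c * wgraph R e y x.
Proof.
case exy: (e x y); last by rewrite /wgraph exy e_sym exy mulr0.
have w_gt0 : 0 < wgraph R e y x by rewrite wgraph_gt0 // e_sym.
by rewrite -ler_pdivrMr //; apply: wgraph_ratio_le.
Qed.

Lemma cut_weight_wgraph_le S :
  0 <= c -> cut_weight (wgraph R e) (~: S) S <= c * #|S|%:R.
Proof.
move=> c_ge0; apply: (@le_trans _ _ (c * cut_weight (wgraph R e) S (~: S))).
  rewrite /cut_weight exchange_big mulr_sumr ler_sum // => j _.
  by rewrite mulr_sumr ler_sum // => i _; apply: wgraph_le_ratio.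
apply: (ler_wpM2l c_ge0); apply: cut_weight_le_card; first exact: wgraph_ge0.
exact: wgraph_row_le1.
Qed.

Lemma wgraph_ratio_bound_ge1 : (1 < n)%N -> connected_graph e -> 1 <= c.
Proof.
move=> n_gt1 e_conn; pose x0 := Ordinal (ltnW n_gt1); pose x1 := Ordinal n_gt1.
have [[|y p] /= x0_p x1_eq] := connectP (e_conn x0 x1).
  by move/(congr1 val): x1_eq.
have {p x0_p x1_eq} ex0y : e x0 y by case/andP: x0_p.
have := wgraph_le_ratio x0 y; have := wgraph_le_ratio y x0.
have := wgraph_gt0 ex0y.
have : 0 < wgraph R e y x0 by rewrite wgraph_gt0 // e_sym.
set a := wgraph R e x0 y; set b := wgraph R e y x0; nra.
Qed.

End Weights.

Section Arithmetic.
Variable R : realFieldType.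

Lemma moran_margin_le (U V r c : R) :
  1 <= U -> U <= V -> 0 <= c -> 0 <= r ->
  2 * c * (U + V - 1) <= r * (U + V - 2) ->
  (U + V - 1) * (c * U + r - c) <= r * U * V.
Proof.
move=> U_ge1 UV c_ge0 r_ge0 gap.
have -> : r * U * V = (U + V - 1) * (c * U + r - c)
                      + (U - 1) * (r * (V - 1) - c * (U + V - 1)) by ring.
rewrite lerDl; apply: mulr_ge0; nra.
Qed.

Lemma clique_drift_ge1 (u v r c D : R) :
  1 <= u -> 1 <= v -> 1 <= c -> c < r ->
  2 * c * (u + v - 1) <= r * (u + v - 2) -> D <= c * u -> D <= v ->
  1 <= r * (u + v) / (r - c) * ((r * (u * v / (u + v - 1)) - D) / (r * u + v)).
Proof.
move=> u_ge1 v_ge1 c_ge1 c_lt_r gap Du Dv.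
have c_ge0 : 0 <= c by lra.
have r_ge0 : 0 <= r by lra.
have M_gt0 : 0 < u + v - 1 by lra.
have F_gt0 : 0 < r * u + v by nra.
have rc_gt0 : 0 < r - c by lra.
have gap_uv : (u + v - 1) * (D + r - c) <= r * u * v.
  have [uv|vu] := lerP u v.
    have := moran_margin_le u_ge1 uv c_ge0 r_ge0 gap; nra.
  have gap' : 2 * c * (v + u - 1) <= r * (v + u - 2) by rewrite [v + u]addrC.
  have := moran_margin_le v_ge1 (ltW vu) c_ge0 r_ge0 gap'.
  have : D <= c * v by nra.
  nra.
have drift_ge : r - c <= r * (u * v / (u + v - 1)) - D.
  have : D + r - c <= r * u * v / (u + v - 1) by rewrite ler_pdivlMr // mulrC.
  rewrite !mulrA; lra.
rewrite mulrA ler_pdivlMr // mul1r.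
apply: (@le_trans _ _ (r * (u + v))); first nra.
rewrite -[leLHS](divfK (lt0r_neq0 rc_gt0)); apply: ler_wpM2l drift_ge.
by apply: divr_ge0; nra.
Qed.

Lemma large_fitness_gap (N c r : R) :
  6 <= N -> 0 <= c -> 2 * c * (1 + 2 / (N - 5)) <= r ->
  2 * c <= r /\ 2 * c * (N - 1) <= r * (N - 2).
Proof.
move=> N_ge6 c_ge0 r_large.
have N5_gt0 : 0 < N - 5 by lra.
have r_ge2c : 2 * c <= r.
  have : 0 <= 2 / (N - 5) by rewrite divr_ge0 // ltW.
  nra.
have : 2 * c * (N - 3) <= r * (N - 5).
  have -> : 2 * c * (N - 3) = 2 * c * (1 + 2 / (N - 5)) * (N - 5).
    by field; rewrite gt_eqF.
  exact: (ler_wpM2r (ltW N5_gt0) r_large).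
split=> //; lra.
Qed.

End Arithmetic.

Definition residents_potential (R : realType) (n : nat) (K : R) (T : {set 'I_n}) : R :=
  K * (n%:R - #|T|%:R).

Lemma residents_potential_ge0 (R : realType) (n : nat) (K : R) (T : {set 'I_n}) :
  0 <= K -> 0 <= residents_potential K T.
Proof.
move=> K_ge0; rewrite mulr_ge0 // subr_ge0 ler_nat.
by rewrite -[X in (_ <= X)%N](card_ord n) max_card.
Qed.

Lemma wclique_potential_drift (R : realType) (n : nat) (WR : 'I_n -> 'I_n -> R)
    (r c : R) (S : {set 'I_n}) :
  1 <= c -> c < r -> 2 * c * (n%:R - 1) <= r * (n%:R - 2) ->
  (forall i j, 0 <= WR i j) -> (forall i, \sum_j WR i j <= 1) ->
  cut_weight WR (~: S) S <= c * #|S|%:R ->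
  \sum_T moran_step WR (@wclique R n) r S T * residents_potential (r * n%:R / (r - c)) T
    <= residents_potential (r * n%:R / (r - c)) S - (~~ absorbing S)%:R.
Proof.
move=> c_ge1 c_lt_r gap WR_ge0 WR_row cut_le.
set K := r * n%:R / (r - c); set phi := residents_potential K.
have r_ge0 : 0 <= r by lra.
have K_ge0 : 0 <= K by rewrite divr_ge0 ?mulr_ge0 //; lra.
have phiS_ge0 : 0 <= phi S := residents_potential_ge0 S K_ge0.
have -> : \sum_T moran_step WR (@wclique R n) r S T * phi T =
    phi S * \sum_T moran_step WR (@wclique R n) r S T
    - K * \sum_T moran_step WR (@wclique R n) r S T * (#|T|%:R - #|S|%:R).
  by rewrite !mulr_sumr -sumrB; apply: eq_bigr => T _; rewrite /phi /residents_potential; ring.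
have := ler_wpM2l phiS_ge0 (moran_step_mass_le1 r_ge0 WR_row (@wclique_row_le1 R n) S).
suff : (~~ absorbing S)%:R <= K * \sum_T moran_step WR (@wclique R n) r S T
                                      * (#|T|%:R - #|S|%:R) by lra.
rewrite moran_step_drift cut_weight_wclique.
have [-> | S_neq0] := eqVneq S finset.set0.
  have -> : cut_weight WR (~: finset.set0) finset.set0 = 0 by apply: big1 => i _; rewrite big_set0.
  by rewrite /absorbing eqxx /= cards0 !mul0r mulr0 subrr mul0r mulr0.
have [-> | S_neqT] := eqVneq S [set: 'I_n].
  have -> : cut_weight WR (~: [set: 'I_n]) [set: 'I_n] = 0.
    by rewrite /cut_weight finset.setCT big_set0.
  by rewrite /absorbing eqxx orbT /= finset.setCT cards0 mulr0 mul0r mulr0 subrr mul0r mulr0.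
have u_ge1 : 1 <= #|S|%:R :> R by rewrite ler1n card_gt0.
have v_ge1 : 1 <= #|~: S|%:R :> R.
  rewrite ler1n card_gt0; apply: contraNneq S_neqT => SC0.
  by rewrite -[S]finset.setCK SC0 finset.setC0.
have n_uv : n%:R = #|S|%:R + #|~: S|%:R :> R by rewrite -natrD cardsC card_ord.
have n1_uv : n.-1%:R = #|S|%:R + #|~: S|%:R - 1 :> R.
  have n_gt0 : (0 < n)%N by rewrite -(ltr0n R) n_uv; lra.
  by rewrite -n_uv -subn1 natrB.
rewrite /absorbing (negbTE S_neq0) (negbTE S_neqT) /= mulr1n /K n1_uv total_fitnessE n_uv.
apply: clique_drift_ge1 => //; first by rewrite -n_uv.
exact: cut_weight_le_card.
Qed.

Lemma exp_absorption_wgraph_wclique_le (R : realType) (n : nat) (e : rel 'I_n)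
    (c r : R) (S : {set 'I_n}) :
  symmetric e -> (forall x y, e x y -> wgraph R e x y / wgraph R e y x <= c) ->
  1 <= c -> c < r -> 2 * c * (n%:R - 1) <= r * (n%:R - 2) ->
  (exp_absorption (wgraph R e) (@wclique R n) r S
     <= (residents_potential (r * n%:R / (r - c)) S)%:E)%E.
Proof.
move=> e_sym ratio_le c_ge1 c_lt_r gap.
have r_ge0 : 0 <= r by lra.
apply: exp_absorption_le => [S' T | S' | S'].
- exact: moran_step_ge0 r_ge0 (@wgraph_ge0 R n e) (@wclique_ge0 R n) S' T.
- by apply: residents_potential_ge0; rewrite divr_ge0 ?mulr_ge0 //; lra.
- apply: wclique_potential_drift => //; first exact: wgraph_ge0.
    exact: wgraph_row_le1.
  by apply: cut_weight_wgraph_le => //; lra.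
Qed.

Theorem theorem9 (R : realType) (n : nat) (e : rel 'I_n) (c r : R) :
  (5 < n)%N ->
  undirected e ->
  connected_graph e ->
  (forall x y : 'I_n, e x y -> wgraph R e x y / wgraph R e y x <= c) ->
  0 < r ->
  2 * c * (1 + 2 / (n - 5)%:R) <= r ->
  (forall S : {set 'I_n},
     (exp_absorption (wgraph R e) (@wclique R n) r S
        <= (r / (r - c) * n%:R * (n - #|S|)%:R)%:E)%E) /\
  (exp_absorption_uniform (wgraph R e) (@wclique R n) r
     <= (r / (r - c) * (n%:R ^+ 2))%:E)%E.
Proof.
move=> n_gt5 [e_sym _] e_conn ratio_le r_gt0 r_large.
have n_gt1 : (1 < n)%N by apply: leq_trans n_gt5.
have c_ge1 : 1 <= c := wgraph_ratio_bound_ge1 e_sym ratio_le n_gt1 e_conn.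
have N_ge6 : 6 <= n%:R :> R by rewrite (ler_nat R 6 n).
rewrite natrB in r_large; last exact: ltnW.
have [r_ge2c gap] := large_fitness_gap N_ge6 (ltW (lt_le_trans ltr01 c_ge1)) r_large.
have c_lt_r : c < r by lra.
have bound S := exp_absorption_wgraph_wclique_le S e_sym ratio_le c_ge1 c_lt_r gap.
set K := r * n%:R / (r - c) in bound.
split=> [S|].
  apply: le_trans (bound S) _; rewrite lee_fin /residents_potential /K natrB.
    by rewrite [r * n%:R / _]mulrAC.
  by rewrite -[X in (_ <= X)%N](card_ord n) max_card.
apply: exp_absorption_uniform_le => [|v]; first exact: ltnW.
apply: le_trans (bound [set v]) _.
have -> : r / (r - c) * n%:R ^+ 2 = K * n%:R by rewrite /K; ring.
rewrite lee_fin /residents_potential cards1; apply: ler_wpM2l; last lra.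
by rewrite divr_ge0 ?mulr_ge0 //; lra.
Qed.
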